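(* If $k$ is even and sufficiently large, and $n$ is even, then for every integer $i$ with $k/2<i<k$, $$N(CM,k,n)\ge \frac{n(5ik-k+i+i^2)-2(k-i)}{(2k+3+i)ik}.$$ In particular, for every $\varepsilon>0$ there is $k_0$ such that for every even $k>k_0$ there is $n_0(k)$ such that for every even $n>n_0(k)$ we have $N(CM,k,n)>(11/5-\varepsilon)\,n/k$.
   Context: We are given $n$ balls, the set $[n]=\{1,\dots,n\}$, each colored with one of two colors by an unknown coloring. A ball $i$ is a majority ball if more than $n/2$ balls have the same color as $i$. A query is a subset $Q\subseteq[n]$ with $|Q|=k$. In the Counting Model (CM), the answer to a query $Q$ is the number $j\le k/2$ such that $Q$ contains exactly $j$ balls of one of the colors (and $k-j$ of the other); no indication of which color is given. A non-adaptive strategy is a family of queries $Q_1,\dots,Q_q$ fixed in advance. It succeeds if for every coloring, the answers determine the outcome: either every coloring consistent with the answers has no majority ball, or there is a ball that is a majority ball in every coloring consistent with the answers. $N(CM,k,n)$ is the minimum number of queries in a successful non-adaptive strategy. *)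

From mathcomp Require Import all_boot all_order all_algebra.
Set Implicit Arguments. Unset Strict Implicit. Unset Printing Implicit Defensive.
Import Order.TTheory GRing.Theory Num.Theory.

Definition coloring (n : nat) := {ffun 'I_n -> bool}.

(* Counting-model answer to query Q: the number j <= |Q|/2 of balls of the
   minority color in Q (no color information given). *)
Definition cm_answer n (c : coloring n) (Q : {set 'I_n}) : nat :=
  minn #|[set x in Q | c x]| #|[set x in Q | ~~ c x]|.

Definition majority_ball n (c : coloring n) (i : 'I_n) : Prop :=
  n < 2 * #|[set x | c x == c i]|.

(* A non-adaptive strategy: a family (list) of queries, each of size k. *)
Definition is_query_family (k : nat) n (S : seq {set 'I_n}) : Prop :=
  forall Q, Q \in S -> #|Q| = k.

Definition consistent n (S : seq {set 'I_n}) (c c' : coloring n) : Prop :=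
  forall Q, Q \in S -> cm_answer c' Q = cm_answer c Q.

Definition successful k n (S : seq {set 'I_n}) : Prop :=
  is_query_family k S /\
  forall c : coloring n,
    (forall c', consistent S c c' -> forall i, ~ majority_ball c' i) \/
    (exists i, forall c', consistent S c c' -> majority_ball c' i).

(* "N(CM,k,n) >= b": every successful non-adaptive strategy uses at least b
   queries (N is the minimum number of queries of a successful strategy). *)
Definition N_CM_ge (k n : nat) (b : rat) : Prop :=
  forall S : seq {set 'I_n}, @successful k n S -> (b <= (size S)%:R)%R.

Definition N_CM_gt (k n : nat) (b : rat) : Prop :=
  forall S : seq {set 'I_n}, @successful k n S -> (b < (size S)%:R)%R.

From mathcomp Require Import all_boot all_order all_algebra.
From mathcomp Require Import zify ring lra.
Set Implicit Arguments. Unset Strict Implicit. Unset Printing Implicit Defensive.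

(* Write k = 2h + 2 and n = 2N. Let R be a balanced colouring (|R| = N) and Y a set of
   balls with |Y ∩ R| <> |Y \ R|. If flipping the colours on Y changes no answer, the
   strategy fails: R has no majority ball while the flipped colouring has one. The flip is
   invisible to a query Q when Q meets Y in as many balls of R as of its complement, or
   when Q ∩ Y is a pair of balls of R and |Q ∩ R| = h + 2.
   Suitable choices of R and Y show that every ball lies in a query, that no query holds
   two balls of degree 1, and that the balls of degree 2, viewed as edges of a multigraph
   on the q queries, form no odd cycle, and no cycle at all when n >= q + 2k: colour the
   edges of a cycle alternately. Counting incidences then gives 3n <= qk + 2q + q. When
   n < q + 2k and 11n > 5kq, there are at most four queries, and two of them share enough
   balls of degree 2 to form a forbidden 2-cycle. Hence 11n <= 5kq once k >= 100, which
   gives both bounds of the theorem (the first one because k < 2i). *)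

Lemma cardsU_disjoint (T : finType) (A B : {set T}) :
  [disjoint A & B] -> #|A :|: B| = #|A| + #|B|.
Proof. by move=> dAB; apply/eqP; rewrite (leq_card_setU A B).2. Qed.

Lemma card_sum_mem (T : finType) (A : {pred T}) : #|A| = \sum_x (x \in A).
Proof. by rewrite -sum1_card big_mkcond; apply: eq_bigr => x _; case: (x \in A). Qed.

Lemma exists_large_fiber (X Y : finType) (D : {set X}) (P : {set Y}) (g : X -> Y) :
  (forall x, x \in D -> g x \in P) -> 0 < #|D| ->
  exists2 p, p \in P & #|D| <= #|P| * #|[set x in D | g x == p]|.
Proof.
move=> gP D_gt0; have card_D : #|D| = \sum_(p in P) #|[set x in D | g x == p]|.
  rewrite -sum1_card (partition_big g (mem P)) //=.
  by apply: eq_bigr => p _; rewrite sum1dep_card.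
case: (boolP [exists p in P, #|D| <= #|P| * #|[set x in D | g x == p]|]).
  by case/exists_inP => p pP le_D; exists p.
move/exists_inPn => small; have /card_gt0P [x0 x0D] := D_gt0.
have P_gt0 : 0 < #|P| by apply/card_gt0P; exists (g x0); apply: gP.
have : #|P| * #|D| <= #|P| * #|D|.-1.
  rewrite {1}card_D big_distrr /= -sum_nat_const leq_sum // => p pP.
  by have := small p pP; rewrite -ltnNge; lia.
by rewrite leq_pmul2l //; lia.
Qed.

Lemma card_set1I (T : finType) (a : T) (R : {set T}) : #|[set a] :&: R| = (a \in R).
Proof.
case: (boolP (a \in R)) => aR; first by rewrite (setIidPl _) ?sub1set ?cards1.
by rewrite disjoint_setI0 ?cards0 // disjoints1.
Qed.

Lemma card_set2I (T : finType) (a b : T) (R : {set T}) :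
  a != b -> #|[set a; b] :&: R| = (a \in R) + (b \in R).
Proof.
move=> neq_ab; rewrite setIUl cardsU_disjoint ?card_set1I //.
by apply: disjointW (subsetIl _ _) (subsetIl _ _) _; rewrite disjoints1 inE.
Qed.

Lemma exists_subset_card (T : finType) (A : {set T}) m :
  m <= #|A| -> exists2 B : {set T}, B \subset A & #|B| = m.
Proof.
elim: m => [|m IH] lt_m; first by exists set0; rewrite ?sub0set ?cards0.
have [B sBA cardB] := IH (ltnW lt_m).
have /card_gt0P [x] : 0 < #|A :\: B| by rewrite cardsDS // cardB subn_gt0.
rewrite inE => /andP [xNB xA].
by exists (x |: B); rewrite ?subUset ?sub1set ?xA ?sBA // cardsU1 xNB cardB.
Qed.

Lemma exists_set_trace (T : finType) (V R0 : {set T}) m :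
  R0 \subset V -> #|R0| <= m <= #|R0| + #|~: V| ->
  exists2 R : {set T}, #|R| = m & R :&: V = R0.
Proof.
move=> sR0V /andP [le_R0m le_mV].
have [P sPVc cardP] : exists2 P : {set T}, P \subset ~: V & #|P| = m - #|R0|.
  by apply: exists_subset_card; rewrite leq_subLR.
have dR0P : [disjoint R0 & P].
  by apply: disjointW sR0V sPVc _; rewrite disjoints_subset setCK.
exists (R0 :|: P); first by rewrite cardsU_disjoint // cardP subnKC.
rewrite setIUl (setIidPl sR0V).
by rewrite disjoint_setI0 ?setU0 // disjoints_subset.
Qed.

Lemma exists_subset_meet2 (T : finType) (X0 X1 : {set T}) c r :
  r <= c -> r <= #|X0 :&: X1| -> c - r <= #|X0 :\: X1| -> c - r <= #|X1 :\: X0| ->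
  exists2 P : {set T}, P \subset X0 :|: X1 &
    [/\ #|P| = c.*2 - r, #|P :&: X0| = c & #|P :&: X1| = c].
Proof.
move=> le_rc le_r le_A le_B.
have [M sM cardM] := exists_subset_card le_r.
have [A sA cardA] := exists_subset_card le_A.
have [B sB cardB] := exists_subset_card le_B.
have memx (x : T) : [&& (x \in M) ==> (x \in X0 :&: X1), (x \in A) ==> (x \in X0 :\: X1)
                      & (x \in B) ==> (x \in X1 :\: X0)].
  by apply/and3P; split; apply/implyP; apply/subsetP.
have [dMA dMB dMAB] : [/\ [disjoint M & A], [disjoint M & B] & [disjoint M :|: A & B]].
  split; rewrite -setI_eq0; apply/eqP/setP => x; move: (memx x); rewrite !inE;
  by case: (x \in M); case: (x \in A); case: (x \in B); case: (x \in X0); case: (x \in X1).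
have [PX0 PX1] : (M :|: A :|: B) :&: X0 = M :|: A /\ (M :|: A :|: B) :&: X1 = M :|: B.
  split; apply/setP => x; move: (memx x); rewrite !inE;
  by case: (x \in M); case: (x \in A); case: (x \in B); case: (x \in X0); case: (x \in X1).
exists (M :|: A :|: B); last split.
- apply/subsetP => x; move: (memx x); rewrite !inE.
  by case: (x \in M); case: (x \in A); case: (x \in B); case: (x \in X0); case: (x \in X1).
- by rewrite cardsU_disjoint // cardsU_disjoint // cardM cardA cardB; lia.
- by rewrite PX0 cardsU_disjoint // cardM cardA subnKC.
- by rewrite PX1 cardsU_disjoint // cardM cardB subnKC.
Qed.

Lemma card_meet_trace (T : finType) (Q Y Rc P : {set T}) :
  Rc \subset Y -> Q :&: Y \subset Rc -> [disjoint P & Y] ->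
  #|Q :&: (Rc :|: P)| = #|Q :&: Y| + #|P :&: (Q :\: Y)|.
Proof.
move=> sRcY sQYRc dPY.
have memx (x : T) : [&& (x \in Rc) ==> (x \in Y), (x \in Q) && (x \in Y) ==> (x \in Rc)
                      & (x \in P) ==> (x \notin Y)].
  apply/and3P; split; apply/implyP; first exact: (subsetP sRcY).
    by move=> QYx; apply: (subsetP sQYRc); rewrite inE.
  by move=> Px; rewrite (disjointFr dPY Px).
rewrite -cardsU_disjoint; last first.
  rewrite -setI_eq0; apply/eqP/setP => x; move: (memx x); rewrite !inE.
  by case: (x \in Q); case: (x \in Y); case: (x \in Rc); case: (x \in P).
apply: eq_card => x; move: (memx x); rewrite !inE.
by case: (x \in Q); case: (x \in Y); case: (x \in Rc); case: (x \in P).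
Qed.

Lemma exists_set_trace_meet2 (T : finType) (Y Rc Q0 Q1 : {set T}) N c :
  #|T| = N.*2 -> Rc \subset Y -> #|Y| <= #|Rc|.*2 ->
  Q0 :&: Y \subset Rc -> Q1 :&: Y \subset Rc ->
  #|Q0 :\: Y| = c.*2 -> #|Q1 :\: Y| = c.*2 ->
  #|Rc| + c <= N -> #|Rc| + c.*2 <= N + #|(Q0 :\: Y) :&: (Q1 :\: Y)| ->
  exists R : {set T}, [/\ #|R| = N, R :&: Y = Rc,
                          #|Q0 :&: R| = #|Q0 :&: Y| + c & #|Q1 :&: R| = #|Q1 :&: Y| + c].
Proof.
move=> card_T sRcY le_Y sQ0 sQ1 card_X0 card_X1 le_Rc le_mu.
set X0 := Q0 :\: Y in card_X0 le_mu *; set X1 := Q1 :\: Y in card_X1 le_mu *.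
set mu := #|X0 :&: X1| in le_mu *.
have mu_le : mu <= c.*2 by rewrite -card_X0 subset_leq_card ?subsetIl.
have card_A : #|X0 :\: X1| = c.*2 - mu by rewrite cardsD card_X0.
have card_B : #|X1 :\: X0| = c.*2 - mu by rewrite cardsD setIC card_X1.
(* r balls of R are taken in X0 :&: X1, as few as the constraints on sizes allow. *)
pose r := maxn (mu - c) (#|Rc| + c.*2 - N).
have [P sP [card_P PX0 PX1]] : exists2 P : {set T}, P \subset X0 :|: X1 &
    [/\ #|P| = c.*2 - r, #|P :&: X0| = c & #|P :&: X1| = c].
  by apply: exists_subset_meet2; rewrite ?card_A ?card_B /r; lia.
have sXYc : X0 :|: X1 \subset ~: Y by rewrite subUset /X0 /X1 !setDE !subsetIr.
have dPY : [disjoint P & Y] by rewrite disjoints_subset (subset_trans sP sXYc).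
pose V := Y :|: (X0 :|: X1).
have card_V : #|V| = #|Y| + (c.*2 + c.*2 - mu).
  rewrite cardsU_disjoint ?cardsU ?card_X0 ?card_X1 //.
  by rewrite disjoint_sym disjoints_subset.
have le_V : #|V| <= N.*2 by rewrite -card_T max_card.
have [R card_R RV] : exists2 R : {set T}, #|R| = N & R :&: V = Rc :|: P.
  apply: exists_set_trace; first by rewrite subUset (subset_trans sRcY) ?(subset_trans sP)
    ?subsetUl ?subsetUr.
  rewrite cardsU_disjoint ?card_P; last by rewrite disjoint_sym; apply: disjointWr sRcY _.
  by rewrite [#|~: V|]cardsCs setCK card_T card_V /r; lia.
have meet_R (Q : {set T}) : Q \subset V -> Q :&: R = Q :&: (Rc :|: P).
  by move=> sQV; rewrite -RV setICA (setIidPl sQV) setIC.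
have [sQ0V sQ1V] : Q0 \subset V /\ Q1 \subset V.
  by split; apply/subsetP => x Qx; rewrite /V /X0 /X1 !inE Qx; case: (x \in Y); rewrite ?orbT.
exists R; split=> //.
- rewrite -(setIidPl (subsetUl Y (X0 :|: X1))) setIA setIAC RV setIUl (setIidPl sRcY).
  by rewrite disjoint_setI0 ?setU0.
- by rewrite meet_R // (card_meet_trace sRcY) // PX0.
- by rewrite meet_R // (card_meet_trace sRcY) // PX1.
Qed.

Lemma exists_set_trace_meet (T : finType) (Y Rc Q : {set T}) N c :
  #|T| = N.*2 -> Rc \subset Y -> #|Y| <= #|Rc|.*2 -> Q :&: Y \subset Rc ->
  #|Q :\: Y| = c.*2 -> #|Rc| + c <= N ->
  exists2 R : {set T}, #|R| = N & R :&: Y = Rc /\ #|Q :&: R| = #|Q :&: Y| + c.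
Proof.
move=> card_T sRcY le_Y sQ card_X le_Rc.
have [|R [card_R RY card_QR _]] :=
  exists_set_trace_meet2 card_T sRcY le_Y sQ sQ card_X card_X le_Rc.
- by rewrite setIid card_X; lia.
by exists R.
Qed.

Section Cycles.

Variables (V E : finType) (inc : E -> V -> bool).

(* The vertices are u 0, ..., u (m - 1) and u m = u 0 closes the cycle; e t joins u t and
   u t.+1. The last condition keeps the two edges of a 2-cycle apart. *)
Definition is_cycle (F : {set E}) m (u : nat -> V) (e : nat -> E) :=
  [/\ 1 < m,
      forall t, t < m -> [&& e t \in F, inc (e t) (u t) & inc (e t) (u t.+1)],
      u m = u 0,
      forall s t, s < m -> t < m -> u s = u t -> s = t &
      forall t, t.+1 < m -> e t != e t.+1].

Definition walk_step (F : {set E}) (p q : V * E) :=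
  [&& q.2 \in F, inc q.2 p.1, inc q.2 q.1, q.1 != p.1 & q.2 != p.2].

Lemma cycle_of_walk F (w : nat -> V * E) :
  (forall t, walk_step F (w t) (w t.+1)) -> exists m u e, is_cycle F m u e.
Proof.
move=> step_w.
pose P j := [exists i : 'I_j, (w i).1 == (w j).1].
have exP : exists j, P j.
  pose f (i : 'I_#|V|.+1) := (w i).1.
  have /injectivePn [i [j neq_ij eq_f]] : ~~ injectiveb f.
    by apply/injectiveP => /leq_card; rewrite card_ord ltnn.
  case: (ltngtP i j) => [lt_ij | lt_ji | /val_inj eq_ij]; last by rewrite eq_ij eqxx in neq_ij.
  - by exists j; apply/existsP; exists (Ordinal lt_ij); apply/eqP.
  - by exists i; apply/existsP; exists (Ordinal lt_ji); apply/eqP.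
case: (ex_minnP exP) => j0 /existsP [i0 /eqP eq_i0] min_j0.
have lt_i0 : i0 < j0 := ltn_ord i0.
have Pij s t : s < t -> t < j0 - i0 -> (w (i0 + s)).1 != (w (i0 + t)).1.
  move=> lt_st lt_t; apply/eqP => eq_st.
  have lt_ist : i0 + s < i0 + t by rewrite ltn_add2l.
  have : P (i0 + t) by apply/existsP; exists (Ordinal lt_ist); rewrite /= eq_st.
  by move/min_j0; lia.
exists (j0 - i0), (fun t => (w (i0 + t)).1), (fun t => (w (i0 + t).+1).2); split.
- case: (ltngtP (j0 - i0) 1) => [|//|j0E]; first lia.
  by have /and5P [_ _ _ + _] := step_w i0; rewrite (_ : i0.+1 = j0) ?eq_i0 ?eqxx //; lia.
- by move=> t _ /=; rewrite addnS; have /and5P [-> -> -> _ _] := step_w (i0 + t).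
- by rewrite /= subnKC ?addn0 // ltnW.
- move=> s t lt_s lt_t /= /eqP; case: (ltngtP s t) => // [lt_st | lt_ts].
  + by rewrite (negbTE (Pij s t lt_st lt_t)).
  + by rewrite eq_sym (negbTE (Pij t s lt_ts lt_s)).
- by move=> t _ /=; rewrite addnS; have /and5P [_ _ _ _] := step_w (i0 + t).+1; rewrite eq_sym.
Qed.

Section MinDegree2.

Variables (F : {set E}) (W : {set V}).
Hypothesis two_ends : forall e, e \in F -> #|[set v | inc e v]| = 2.
Hypothesis ends_in_W : forall e v, e \in F -> inc e v -> v \in W.
Hypothesis deg_ge2 : forall v, v \in W -> 1 < #|[set e in F | inc e v]|.

Lemma exists_walk_step p :
  [&& p.1 \in W, p.2 \in F & inc p.2 p.1] -> exists q, walk_step F p q.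
Proof.
case: p => v e /and3P /= [vW eF inc_ev].
have /card_gt0P [e' ] : 0 < #|[set e' in F | inc e' v] :\ e|.
  by move: (deg_ge2 vW); rewrite (cardsD1 e) !inE eF inc_ev /=; lia.
rewrite !inE => /and3P [neq_e' e'F inc_e'v].
have /card_gt0P [v'] : 0 < #|[set v' | inc e' v'] :\ v|.
  by move: (two_ends e'F); rewrite (cardsD1 v) inE inc_e'v /=; lia.
by rewrite !inE => /andP [neq_v' inc_e'v']; exists (v', e'); apply/and5P.
Qed.

Lemma cycle_of_min_degree2 : 0 < #|W| -> exists m u e, is_cycle F m u e.
Proof.
case/card_gt0P=> v0 v0W.
have /card_gt0P [e0] : 0 < #|[set e in F | inc e v0]| by move: (deg_ge2 v0W); lia.
rewrite inE => /andP [e0F inc_e0].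
pose good p := [&& p.1 \in W, p.2 \in F & inc p.2 p.1].
pose next p := if [pick q | walk_step F p q] is Some q then q else p.
have next_step p : good p -> walk_step F p (next p).
  move=> /exists_walk_step [q step_q]; rewrite /next.
  by case: pickP => [//| /(_ q)]; rewrite step_q.
have good_next p : good p -> good (next p).
  move=> /next_step /and5P [eF _ inc_e _ _]; apply/and3P; split=> //.
  exact: ends_in_W inc_e.
have good_iter t : good (iter t next (v0, e0)).
  by elim: t => [|t IH]; [apply/and3P | rewrite iterS; apply: good_next].
apply: (@cycle_of_walk F (fun t => iter t next (v0, e0))) => t.
by rewrite iterS; apply: next_step.
Qed.

End MinDegree2.

Lemma cycle_length_le F m u e : is_cycle F m u e -> m <= #|V|.
Proof.
case=> _ _ _ inj_u _; rewrite -[m in m <= _](card_ord m).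
rewrite -(card_in_imset (f := fun t : 'I_m => u t)) ?max_card // => s t _ _.
by move/(inj_u _ _ (ltn_ord s) (ltn_ord t)) /val_inj.
Qed.

Lemma is_cycle_subset (F F' : {set E}) m u e :
  F' \subset F -> is_cycle F' m u e -> is_cycle F m u e.
Proof.
move=> sF [m_gt1 edges_e u_m inj_u ne_e]; split=> // t lt_t.
by case/and3P: (edges_e t lt_t) => /(subsetP sF) -> -> ->.
Qed.

Lemma cycle_of_many_edges (F : {set E}) (W : {set V}) :
  (forall e, e \in F -> #|[set v | inc e v]| = 2) ->
  (forall e v, e \in F -> inc e v -> v \in W) ->
  0 < #|W| <= #|F| -> exists m u e, is_cycle F m u e.
Proof.
move=> two_ends ends_in_W /andP [W_gt0 le_WF]; have [c] := ubnP #|W|.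
elim: c W F two_ends ends_in_W W_gt0 le_WF => [|c IH] W F two_ends ends_in_W W_gt0 le_WF;
  rewrite ?ltn0 // ltnS => le_Wc.
(* Unless all degrees are at least 2, delete a vertex of degree at most 1 and its edge. *)
case: (boolP [exists v in W, #|[set e in F | inc e v]| <= 1]); last first.
  move/exists_inPn=> deg_ge2; apply: cycle_of_min_degree2 two_ends ends_in_W _ W_gt0.
  by move=> v /deg_ge2; rewrite -ltnNge.
case/exists_inP=> w wW deg_w.
pose F' := [set e in F | ~~ inc e w].
have card_F : #|F| = #|F'| + #|[set e in F | inc e w]|.
  rewrite -(cardsID [set e | inc e w] F) addnC.
  by congr (_ + _); apply: eq_card => x; rewrite !inE andbC.
have W_gt1 : 1 < #|W|.
  have /card_gt0P [e eF] : 0 < #|F| by lia.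
  have /subset_leq_card : [set v | inc e v] \subset W.
    by apply/subsetP => v; rewrite inE; apply: ends_in_W.
  by rewrite two_ends.
have [|||||m [u [e cyc]]] := IH (W :\ w) F'.
- by move=> e; rewrite inE => /andP [eF _]; apply: two_ends.
- move=> e v; rewrite !inE => /andP [eF Ninc_ew] inc_ev.
  by rewrite (ends_in_W _ _ eF inc_ev) andbT; apply: contraNneq Ninc_ew => <-.
- by rewrite [#|W|](cardsD1 w) wW in W_gt1; lia.
- by rewrite [#|W|](cardsD1 w) wW in le_WF; lia.
- by rewrite [#|W|](cardsD1 w) wW in le_Wc; lia.
by exists m, u, e; apply: is_cycle_subset cyc; apply/subsetP => x; rewrite inE => /andP [].
Qed.

Definition cpred m s := if s is s'.+1 then s' else m.-1.

Definition cycle_edges m (e : nat -> E) := [set e (nat_of_ord t) | t : 'I_m].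

Lemma set2_card (T : finType) (A : {set T}) a b :
  #|A| = 2 -> a \in A -> b \in A -> a != b -> A = [set a; b].
Proof.
move=> card_A aA bA neq_ab; apply/esym/eqP; rewrite eqEcard cards2 neq_ab card_A leqnn andbT.
by apply/subsetP => x; rewrite !inE => /orP [] /eqP ->.
Qed.

Section CycleStructure.

Variables (F : {set E}) (m : nat) (u : nat -> V) (e : nat -> E).
Hypothesis two_ends : forall x, x \in F -> #|[set v | inc x v]| = 2.
Hypothesis cyc : is_cycle F m u e.

Lemma cpred_lt s : s < m -> cpred m s < m.
Proof. by case: cyc => m_gt1 _ _ _ _; case: s => [|s] /=; lia. Qed.

Lemma cycle_succ_eq s t : s < m -> t < m -> (u s == u t.+1) = (t == cpred m s).
Proof.
case: cyc => m_gt1 _ u_m inj_u _ lt_s lt_t; apply/eqP/eqP => [eq_u | ->].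
  case: (ltngtP t.+1 m) => [lt_t1 | | eq_t1]; last 2 first.
  - lia.
  - by move: eq_u; rewrite eq_t1 u_m => /(inj_u _ _ lt_s (ltnW m_gt1)) ->; rewrite -eq_t1.
  by move/(inj_u _ _ lt_s lt_t1): eq_u => ->.
by case: s lt_s => [|s] //= _; rewrite prednK ?u_m //; lia.
Qed.

Lemma cycle_step_neq t : t < m -> u t != u t.+1.
Proof.
move=> lt_t; rewrite (cycle_succ_eq lt_t lt_t); case: cyc => m_gt1 _ _ _ _.
by case: t lt_t => [|t] /=; lia.
Qed.

Lemma cycle_ends t : t < m -> [set v | inc (e t) v] = [set u t; u t.+1].
Proof.
move=> lt_t; case: cyc => _ edges_e _ _ _; case/and3P: (edges_e t lt_t) => eF inc_t inc_t1.
by apply: set2_card; rewrite ?inE ?two_ends ?cycle_step_neq.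
Qed.

Lemma cycle_edge_inj s t : s < m -> t < m -> e s = e t -> s = t.
Proof.
case: cyc => m_gt1 _ _ inj_u ne_e lt_s lt_t eq_e.
have ends_eq : [set u s; u s.+1] = [set u t; u t.+1] by rewrite -!cycle_ends // eq_e.
have /set2P [/(inj_u _ _ lt_s lt_t) // | eq_st1] : u s \in [set u t; u t.+1].
  by rewrite -ends_eq set21.
have /set2P [eq_s1t | eq_s1t1] : u s.+1 \in [set u t; u t.+1] by rewrite -ends_eq set22.
  have /eqP := eq_st1; rewrite cycle_succ_eq // => /eqP pred_s.
  have /eqP := esym eq_s1t; rewrite cycle_succ_eq // => /eqP pred_t.
  have [[s0 t1] | [s1 t0]] : (s = 0 /\ t = 1) \/ (s = 1 /\ t = 0).
    by move: pred_s pred_t; rewrite /cpred; case: s lt_s {eq_e eq_st1 eq_s1t ends_eq} => [|s] lt_s;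
      case: t lt_t => [|t] lt_t; lia.
  - by move: eq_e (ne_e 0 m_gt1); rewrite s0 t1 => ->; rewrite eqxx.
  - by move: eq_e (ne_e 0 m_gt1); rewrite s1 t0 => ->; rewrite eqxx.
by move: (cycle_step_neq lt_s); rewrite eq_st1 eq_s1t1 eqxx.
Qed.

Lemma cycle_pred_edge_neq s : s < m -> e s != e (cpred m s).
Proof.
move=> lt_s; apply/eqP => /(cycle_edge_inj lt_s (cpred_lt lt_s)).
by case: cyc => m_gt1 _ _ _ _; case: s lt_s => [|s] /=; lia.
Qed.

Lemma cycle_edges_at s :
  s < m -> [set x in cycle_edges m e | inc x (u s)] = [set e s; e (cpred m s)].
Proof.
move=> lt_s; have lt_ps := cpred_lt lt_s.
have incE x t : t < m -> x = e t -> inc x (u s) = (u s \in [set u t; u t.+1]).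
  by move=> lt_t ->; rewrite -cycle_ends // inE.
apply/setP => x; rewrite !inE; apply/andP/orP => [[/imsetP [t _ ->]] | ].
  rewrite (incE _ t) // => /set2P [/eqP | /eqP]; last rewrite cycle_succ_eq //.
    by case: cyc => _ _ _ inj_u _ /eqP /(inj_u _ _ lt_s (ltn_ord t)) ->; left.
  by move=> /eqP ->; right.
case=> /eqP ->; split; do ?[by apply/imsetP; exists (Ordinal lt_s)
                            | by apply/imsetP; exists (Ordinal lt_ps)].
- by rewrite (incE _ s) ?set21.
- by rewrite (incE _ (cpred m s)) // !inE cycle_succ_eq // eqxx orbT.
Qed.

Lemma cycle_edges_off v :
  (forall s, s < m -> v != u s) -> [set x in cycle_edges m e | inc x v] = set0.
Proof.
move=> off_v; apply/setP => x; rewrite !inE; apply/negbTE/andP => [[/imsetP [t _ ->] inc_v]].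
have lt_t := ltn_ord t.
have /set2P : v \in [set u t; u t.+1] by rewrite -cycle_ends // inE.
case => eq_v; first by move: (off_v t lt_t); rewrite eq_v eqxx.
case: cyc => m_gt1 _ u_m _ _; have [lt_t1 | eq_t1] : t.+1 < m \/ t.+1 = m by lia.
- by move: (off_v _ lt_t1); rewrite eq_v eqxx.
- by move: (off_v 0 (ltnW m_gt1)); rewrite eq_v eq_t1 u_m eqxx.
Qed.

Lemma mem_cycle_edges_pred (P : pred nat) t :
  t < m -> (e t \in [set e (nat_of_ord s) | s : 'I_m & P s]) = P t.
Proof.
move=> lt_t; apply/imsetP/idP => [[s Ps /(cycle_edge_inj lt_t (ltn_ord s)) ->] | Pt].
  by rewrite inE in Ps.
by exists (Ordinal lt_t); rewrite ?inE.
Qed.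

Lemma card_cycle_edges_pred (P : pred nat) :
  #|[set e (nat_of_ord t) | t : 'I_m & P t]| = #|[set t : 'I_m | P t]|.
Proof.
by apply: card_in_imset => s t _ _ /(cycle_edge_inj (ltn_ord s) (ltn_ord t)) /val_inj.
Qed.

Lemma card_cycle_edges : #|cycle_edges m e| = m.
Proof.
rewrite card_imset ?card_ord // => s t.
by move/(cycle_edge_inj (ltn_ord s) (ltn_ord t)) /val_inj.
Qed.

End CycleStructure.

End Cycles.

Lemma card_ord_pred m (P : pred nat) : #|[set t : 'I_m | P t]| = \sum_(t < m) P t.
Proof. by rewrite card_sum_mem; apply: eq_bigr => t _; rewrite inE. Qed.

Lemma sum_odd_ord m : \sum_(t < m) odd t = m./2.
Proof.
elim: m => [|m IH]; first by rewrite big_ord0.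
by rewrite big_ord_recr /= IH uphalf_half addnC.
Qed.

Lemma card_even_ord m : #|[set t : 'I_m | ~~ odd t]| = m - m./2.
Proof.
rewrite -[m in m - _](card_ord m) -(cardsC [set t : 'I_m | odd t]) card_ord_pred sum_odd_ord.
by rewrite addKn; apply: eq_card => t; rewrite !inE.
Qed.

Lemma card_zero_or_odd_ord m :
  0 < m -> #|[set t : 'I_m | (t == 0 :> nat) || odd t]| = m./2 + 1.
Proof.
case: m => // m _; rewrite (card_ord_pred _ (fun t => (t == 0) || odd t)) big_ord_recl /=.
rewrite addnC; congr (_ + _).
by rewrite uphalfE -sum_odd_ord big_ord_recl; apply: eq_bigr => i _.
Qed.

Definition coloring_of n (R : {set 'I_n}) : coloring n := [ffun x => x \in R].

Definition symdiff (T : finType) (A B : {set T}) := (A :\: B) :|: (B :\: A).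

Section ColoringsOfSets.

Variable n : nat.
Implicit Types (R Q : {set 'I_n}) (S : seq {set 'I_n}).

Lemma cm_answer_coloring_of R Q :
  cm_answer (coloring_of R) Q = minn #|Q :&: R| #|Q :\: R|.
Proof. by congr minn; apply: eq_card => x; rewrite !inE ffunE // andbC. Qed.

Lemma card_color_class R i :
  #|[set x | coloring_of R x == coloring_of R i]| = if i \in R then #|R| else n - #|R|.
Proof.
case: ifP => Ri.
  by apply: eq_card => x; rewrite !inE !ffunE Ri eqb_id.
rewrite -[n in n - _](card_ord n) -(cardsC R) addKn.
by apply: eq_card => x; rewrite !inE !ffunE Ri eqbF_neg.
Qed.

Lemma majority_ball_coloring_ofE R i :
  majority_ball (coloring_of R) i <-> n < (if i \in R then #|R| else n - #|R|).*2.
Proof. by rewrite /majority_ball card_color_class -mul2n. Qed.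

Lemma balanced_no_majority R i : #|R|.*2 = n -> ~ majority_ball (coloring_of R) i.
Proof. by move=> bal /majority_ball_coloring_ofE; case: ifP; lia. Qed.

Lemma unbalanced_majority R : #|R|.*2 != n -> exists i, majority_ball (coloring_of R) i.
Proof.
move=> unbal; have le_R : #|R| <= n by rewrite -[X in _ <= X](card_ord n) max_card.
case: (ltngtP #|R|.*2 n) => [lt_Rn | lt_nR | eq_Rn]; last by rewrite eq_Rn eqxx in unbal.
- have /card_gt0P [i] : 0 < #|~: R| by rewrite cardsCs setCK card_ord; lia.
  by rewrite inE => /negbTE NRi; exists i; apply/majority_ball_coloring_ofE; rewrite NRi; lia.
- have /card_gt0P [i Ri] : 0 < #|R| by lia.
  by exists i; apply/majority_ball_coloring_ofE; rewrite Ri.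
Qed.

Lemma successful_separates_balanced k S R R' :
  successful k S -> #|R|.*2 = n -> #|R'|.*2 != n ->
  ~ consistent S (coloring_of R) (coloring_of R').
Proof.
move=> [_ decides] bal unbal cons; case: (decides (coloring_of R)) => [no_maj | [i maj]].
  by have [i] := unbalanced_majority unbal; apply: no_maj cons i.
by apply: (balanced_no_majority bal); apply: maj.
Qed.

Lemma card_meet_symdiff Q R Y :
  #|Q :&: symdiff R Y| + #|Q :&: Y :&: R| = #|Q :&: R| + #|Q :&: Y :\: R|.
Proof.
rewrite -!cardsU_disjoint; last 2 first.
- by rewrite -setI_eq0; apply/eqP/setP => x; rewrite !inE; case: (x \in Q); case: (x \in R).
- rewrite -setI_eq0; apply/eqP/setP => x; rewrite !inE.
  by case: (x \in Q); case: (x \in R); case: (x \in Y).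
apply: eq_card => x; rewrite !inE.
by case: (x \in Q); case: (x \in R); case: (x \in Y).
Qed.

Lemma consistent_symdiff k S R Y :
  is_query_family k S ->
  (forall Q, Q \in S -> #|Q :&: symdiff R Y| = #|Q :&: R| \/
                        #|Q :&: symdiff R Y| + #|Q :&: R| = k) ->
  consistent S (coloring_of R) (coloring_of (symdiff R Y)).
Proof.
move=> sizes flip_ok Q SQ; rewrite !cm_answer_coloring_of.
have cardD A : #|Q :\: A| = k - #|Q :&: A| by rewrite -(sizes Q SQ) -(cardsID A Q) addKn.
have cardI A : #|Q :&: A| <= k by rewrite -(sizes Q SQ) subset_leq_card ?subsetIl.
rewrite !cardD; have := cardI R; have := cardI (symdiff R Y).
by case: (flip_ok Q SQ) => [-> // | ]; lia.
Qed.

(* Every query is the whole set, so all colourings with a single ball of one colour give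
   the same answers, and each ball is a minority ball in one of them. *)
Lemma full_queries_fail S : 2 < n -> ~ successful n S.
Proof.
move=> n_gt2 [sizes decides].
have full (Q : {set 'I_n}) : Q \in S -> Q = setT.
  by move=> SQ; apply/eqP; rewrite eqEcard subsetT cardsT card_ord (sizes _ SQ) /=.
have single (a b : 'I_n) : consistent S (coloring_of [set a]) (coloring_of [set b]).
  by move=> Q SQ; rewrite !cm_answer_coloring_of (full Q SQ) !setTI !setTD !cards1 !cardsC1.
have singleton_minority (a b : 'I_n) : majority_ball (coloring_of [set a]) b -> b != a.
  move/majority_ball_coloring_ofE; rewrite inE cards1; case: eqP => [_ lt_n | /eqP //].
  by exfalso; lia.
pose x0 : 'I_n := Ordinal (ltnW (ltnW n_gt2)); pose x1 : 'I_n := Ordinal (ltnW n_gt2).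
case: (decides (coloring_of [set x0])) => [no_maj | [i maj]].
  apply: (no_maj _ (fun _ _ => erefl) x1); apply/majority_ball_coloring_ofE.
  by rewrite inE cards1 /=; lia.
by move: (singleton_minority _ _ (maj _ (single x0 i))); rewrite eqxx.
Qed.

End ColoringsOfSets.

Lemma small_regime_arith q n1 n2 s k n h N :
  n2 <= 'C(q, 2) * s -> n.*2 + n <= q * k + n1.*2 + n2 -> n1 <= q -> q <= 4 ->
  5 * k * q < 11 * n -> 100 <= k -> h.+2 <= N -> k = h.*2.+2 -> n = N.*2 ->
  2 <= s /\ h.*2 + 4 <= N + s.
Proof. by rewrite bin2; case: q => [|[|[|[|[|q]]]]] //=; lia. Qed.

Section Strategy.

Variables (n k h N : nat) (S : seq {set 'I_n}).
Hypotheses (succ : successful k S) (k_eq : k = h.*2.+2) (n_eq : n = N.*2).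
Implicit Types (R Y Q : {set 'I_n}) (x : 'I_n) (j : 'I_(size S)).

Definition query (j : 'I_(size S)) := nth set0 S j.

Definition incident (x : 'I_n) j := x \in query j.

Definition queries_at (x : 'I_n) := [set j | incident x j].

Definition deg1_balls := [set x | #|queries_at x| == 1].

Definition deg2_balls := [set x | #|queries_at x| == 2].

(* In the second case the flip takes |Q :&: R| from h + 2 to h = k - (h + 2), which leaves
   the answer h unchanged. *)
Definition invisible_flip (R Y Q : {set 'I_n}) :=
  #|Q :&: Y :&: R| = #|Q :&: Y :\: R| \/
  [/\ Q :&: Y \subset R, #|Q :&: Y| = 2 & #|Q :&: R| = h.+2].

Lemma card_query j : #|query j| = h.*2.+2.
Proof. by rewrite -k_eq; apply: succ.1; rewrite mem_nth. Qed.

Lemma invisible_flip_balanced R Y :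
  #|R| = N -> (forall j, invisible_flip R Y (query j)) -> #|Y :&: R| = #|Y :\: R|.
Proof.
move=> card_R invisible; apply/eqP/negPn/negP => unbalanced_Y.
apply: (successful_separates_balanced (R := R) (R' := symdiff R Y) succ).
  by rewrite card_R n_eq.
  by move: unbalanced_Y (card_meet_symdiff setT R Y); rewrite !setTI card_R; lia.
apply: consistent_symdiff succ.1 _ => Q SQ.
have lt_Q : index Q S < size S by rewrite index_mem.
have QE : query (Ordinal lt_Q) = Q by rewrite /query nth_index.
have := card_query (Ordinal lt_Q); have := invisible (Ordinal lt_Q); rewrite QE.
case=> [eq_QYR | [sQYR card_QY card_QR]] card_Q; have := card_meet_symdiff Q R Y; first lia.
have /eqP QYR0 : Q :&: Y :\: R == set0 by rewrite setD_eq0.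
by rewrite (setIidPl sQYR) QYR0 cards0; lia.
Qed.

Lemma invisible_flip_inside R Y :
  #|R| = N -> Y \subset R -> (forall j, invisible_flip R Y (query j)) -> Y = set0.
Proof.
move=> card_R sYR /(invisible_flip_balanced card_R).
have /eqP -> : Y :\: R == set0 by rewrite setD_eq0.
by rewrite (setIidPl sYR) cards0 => /cards0_eq.
Qed.

Lemma invisible_flip_disjoint R Y Q : Q :&: Y = set0 -> invisible_flip R Y Q.
Proof. by move=> QY0; left; rewrite QY0 set0I set0D !cards0. Qed.

Lemma invisible_flip_split R Y Q a b :
  Q :&: Y = [set a; b] -> (a \in R) != (b \in R) -> invisible_flip R Y Q.
Proof.
move=> QY neq_ab; have neq : a != b by apply: contraNneq neq_ab => ->.
left; rewrite QY setDE !card_set2I // !inE.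
by move: neq_ab; case: (a \in R); case: (b \in R).
Qed.

Lemma invisible_flip_pair R Y Q a b :
  Q :&: Y = [set a; b] -> a != b -> a \in R -> b \in R -> #|Q :&: R| = h.+2 ->
  invisible_flip R Y Q.
Proof.
by move=> QY neq aR bR card_QR; right; rewrite QY cards2 neq subUset !sub1set aR bR.
Qed.

Lemma card_query_diff j Y : #|query j :&: Y| = 2 -> #|query j :\: Y| = h.*2.
Proof. by move=> card_QY; rewrite cardsD card_query card_QY subn2. Qed.

Lemma queries_at_gt0 x : 0 < N -> 0 < #|queries_at x|.
Proof.
move=> N_gt0; rewrite card_gt0; apply/negP => /eqP no_query.
have [R card_R RE] : exists2 R : {set 'I_n}, #|R| = N & R :&: [set x] = [set x].
  by apply: exists_set_trace; rewrite ?cards1 ?cardsC1 ?card_ord //; lia.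
suff /eqP : [set x] = set0 by rewrite -cards_eq0 cards1.
apply: (invisible_flip_inside card_R); first by rewrite -RE subsetIl.
move=> j; apply: invisible_flip_disjoint; apply/setP => y; rewrite !inE.
case: eqP => [-> | _]; rewrite ?andbF ?andbT //.
by apply/negbTE/negP => xQ; move/setP/(_ j): no_query; rewrite !inE /incident xQ.
Qed.

Lemma no_two_deg1_in_query (x w : 'I_n) j0 :
  h.+2 <= N -> x != w -> queries_at x = [set j0] -> queries_at w = [set j0] -> False.
Proof.
move=> le_hN neq_xw Jx Jw; set Y := [set x; w].
have inQ y j : queries_at y = [set j0] -> (y \in query j) = (j == j0).
  by move/setP/(_ j); rewrite !inE.
have QY j : query j :&: Y = if j == j0 then Y else set0.
  case: eqP => [-> | /eqP neq_j].
    by apply/setIidPr; rewrite subUset !sub1set (inQ _ _ Jx) (inQ _ _ Jw) eqxx.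
  apply/disjoint_setI0; rewrite disjoint_sym disjoints_subset subUset !sub1set !inE.
  by rewrite (inQ _ _ Jx) (inQ _ _ Jw) (negbTE neq_j).
have card_Y : #|Y| = 2 by rewrite cards2 neq_xw.
have card_QY : #|query j0 :&: Y| = 2 by rewrite QY eqxx.
have [R card_R [RY card_QR]] : exists2 R : {set 'I_n}, #|R| = N & R :&: Y = Y /\
    #|query j0 :&: R| = #|query j0 :&: Y| + h.
  by apply: exists_set_trace_meet; rewrite ?card_ord ?subsetIr ?card_query_diff ?card_Y //; lia.
suff /eqP : Y = set0 by rewrite -cards_eq0 card_Y.
have sYR : Y \subset R by rewrite -RY subsetIl.
apply: (invisible_flip_inside card_R sYR) => j; case: (eqVneq j j0) => [-> | neq_j].
  apply: (invisible_flip_pair (a := x) (b := w)) => //; first by rewrite QY eqxx.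
  - by rewrite (subsetP sYR) ?set21.
  - by rewrite (subsetP sYR) ?set22.
  - by rewrite card_QR card_QY.
by apply: invisible_flip_disjoint; rewrite QY (negbTE neq_j).
Qed.

Lemma deg2_two_ends x : x \in deg2_balls -> #|[set j | incident x j]| = 2.
Proof. by rewrite inE => /eqP. Qed.

Section CycleFlip.

Variables (m : nat) (u : nat -> 'I_(size S)) (e : nat -> 'I_n).
Hypothesis cyc : is_cycle incident deg2_balls m u e.
Local Notation Y := (cycle_edges m e).

Lemma query_meet_cycle_at s : s < m -> query (u s) :&: Y = [set e s; e (cpred m s)].
Proof.
move=> lt_s; rewrite -(cycle_edges_at deg2_two_ends cyc lt_s).
by apply/setP => x; rewrite !inE andbC.
Qed.

Lemma query_meet_cycle_off j : (forall s, s < m -> j != u s) -> query j :&: Y = set0.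
Proof.
move=> off_j; rewrite -(cycle_edges_off deg2_two_ends cyc off_j).
by apply/setP => x; rewrite !inE andbC.
Qed.

Lemma cycle_flip_half (P : pred nat) R :
  #|R| = N -> R :&: Y = [set e (nat_of_ord t) | t : 'I_m & P t] ->
  (forall s, s < m -> P s != P (cpred m s) \/
                      [/\ P s, P (cpred m s) & #|query (u s) :&: R| = h.+2]) ->
  #|[set t : 'I_m | P t]|.*2 = m.
Proof.
move=> card_R RY alternate.
have inR t : t < m -> (e t \in R) = P t.
  move=> lt_t; rewrite -(mem_cycle_edges_pred deg2_two_ends cyc _ lt_t) -RY inE andbC.
  by rewrite (_ : e t \in Y) //; apply/imsetP; exists (Ordinal lt_t).
have /invisible_flip_balanced : forall j, invisible_flip R Y (query j).
  move=> j; case: (boolP [exists s : 'I_m, j == u s]) => [/existsP [[s lt_s] /= /eqP ->] | off].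
    have QY := query_meet_cycle_at lt_s; have lt_ps := cpred_lt cyc lt_s.
    case: (alternate s lt_s) => [split | [Ps Pps card_QR]].
      by apply: (invisible_flip_split QY); rewrite !inR.
    by apply: (invisible_flip_pair QY); rewrite ?inR ?(cycle_pred_edge_neq deg2_two_ends cyc).
  apply: invisible_flip_disjoint; apply: query_meet_cycle_off => s lt_s.
  by apply: contraNneq off => ->; apply/existsP; exists (Ordinal lt_s).
rewrite cardsD setIC RY (card_cycle_edges_pred deg2_two_ends cyc).
rewrite (card_cycle_edges deg2_two_ends cyc) => half.
have : #|[set t : 'I_m | P t]| <= m by rewrite -[X in _ <= X](card_ord m) max_card.
lia.
Qed.

Lemma cycle_edges_pred_subset (P : pred nat) :
  [set e (nat_of_ord t) | t : 'I_m & P t] \subset Y.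
Proof. by apply/subsetP => _ /imsetP [t _ ->]; apply/imsetP; exists t. Qed.

Lemma query_meet_cycle_subset (P : pred nat) s :
  s < m -> P s -> P (cpred m s) ->
  query (u s) :&: Y \subset [set e (nat_of_ord t) | t : 'I_m & P t].
Proof.
move=> lt_s Ps Pps; rewrite query_meet_cycle_at // subUset !sub1set.
by rewrite !(mem_cycle_edges_pred deg2_two_ends cyc) ?(cpred_lt cyc lt_s) ?Ps.
Qed.

Lemma card_query_meet_cycle s : s < m -> #|query (u s) :&: Y| = 2.
Proof.
by move=> lt_s; rewrite query_meet_cycle_at // cards2 (cycle_pred_edge_neq deg2_two_ends cyc).
Qed.

Lemma card_cycle_query_le s : s < m -> m + h.*2 <= N.*2.
Proof.
move=> lt_s; rewrite -(card_query_diff (card_query_meet_cycle lt_s)).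
rewrite -[m in m + _](card_cycle_edges deg2_two_ends cyc) -cardsU_disjoint.
  by rewrite -n_eq -[X in _ <= X](card_ord n) max_card.
by rewrite disjoint_sym disjoints_subset setDE subsetIr.
Qed.

(* Colour the even-numbered edges: only u 0 sees two edges of R, and N is large enough
   because the cycle and query (u 0) fit among the n balls. *)
Lemma no_odd_cycle : ~~ odd m.
Proof.
apply/negP => odd_m; case: (cyc) => m_gt1 _ _ _ _; have m_gt0 : 0 < m by lia.
have halves := odd_double_half m; rewrite odd_m in halves.
have le_mN := card_cycle_query_le m_gt0.
pose P t := ~~ odd t.
have Pm1 : P m.-1 by rewrite /P; move: odd_m; rewrite -{1}(prednK m_gt0) /= => ->.
have card_Q0Y := card_query_meet_cycle m_gt0.
have card_Rc := card_cycle_edges_pred deg2_two_ends cyc P; rewrite card_even_ord in card_Rc.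
have [R card_R [RY card_Q0R]] : exists2 R : {set 'I_n}, #|R| = N &
    R :&: Y = [set e (nat_of_ord t) | t : 'I_m & P t] /\
    #|query (u 0) :&: R| = #|query (u 0) :&: Y| + h.
  apply: exists_set_trace_meet; rewrite ?card_ord ?(card_query_diff card_Q0Y) //.
  - exact: cycle_edges_pred_subset.
  - by rewrite (card_cycle_edges deg2_two_ends cyc) card_Rc; lia.
  - exact: query_meet_cycle_subset.
  - by rewrite card_Rc; lia.
suff: #|[set t : 'I_m | P t]|.*2 = m by rewrite card_even_ord; lia.
apply: (cycle_flip_half card_R RY) => -[_ | s lt_s]; last by left; rewrite /P /=; case: (odd s).
by right; split; rewrite // card_Q0R card_Q0Y.
Qed.

(* Colour e 0 and the odd-numbered edges: only u 0 and u 1 see two edges of R. *)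
Lemma no_even_cycle :
  ~~ odd m -> m./2 + 1 + h <= N ->
  m./2 + 1 + h.*2 <= N + #|(query (u 0) :\: Y) :&: (query (u 1) :\: Y)| -> False.
Proof.
move=> even_m le_N le_mu; case: (cyc) => m_gt1 _ _ _ _; have m_gt0 : 0 < m by lia.
have halves := odd_double_half m; rewrite (negbTE even_m) in halves.
pose P t := (t == 0) || odd t.
have Pm1 : P m.-1.
  by rewrite /P orbC; move: even_m; rewrite -{1}(prednK m_gt0) /= negbK => ->.
have card_Rc := card_cycle_edges_pred deg2_two_ends cyc P.
rewrite card_zero_or_odd_ord // in card_Rc.
have card_Q0Y := card_query_meet_cycle m_gt0; have card_Q1Y := card_query_meet_cycle m_gt1.
have [R [card_R RY card_Q0R card_Q1R]] : exists R : {set 'I_n}, [/\ #|R| = N,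
    R :&: Y = [set e (nat_of_ord t) | t : 'I_m & P t],
    #|query (u 0) :&: R| = #|query (u 0) :&: Y| + h &
    #|query (u 1) :&: R| = #|query (u 1) :&: Y| + h].
  apply: exists_set_trace_meet2;
    rewrite ?card_ord ?(card_query_diff card_Q0Y) ?(card_query_diff card_Q1Y) ?card_Rc //.
  - exact: cycle_edges_pred_subset.
  - by rewrite (card_cycle_edges deg2_two_ends cyc); lia.
  - exact: query_meet_cycle_subset.
  - exact: query_meet_cycle_subset.
suff: #|[set t : 'I_m | P t]|.*2 = m by rewrite card_zero_or_odd_ord //; lia.
apply: (cycle_flip_half card_R RY) => -[_ | [_ | s lt_s]].
- by right; split; rewrite // card_Q0R card_Q0Y.
- by right; split; rewrite // card_Q1R card_Q1Y.
- by left; rewrite /P /=; case: (odd s).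
Qed.

End CycleFlip.

Lemma sum_card_queries_at : \sum_x #|queries_at x| = size S * k.
Proof.
rewrite (eq_bigr (fun x => \sum_j (x \in query j : nat))); last first.
  by move=> x _; rewrite card_sum_mem; apply: eq_bigr => j _; rewrite inE.
rewrite exchange_big /= (eq_bigr (fun _ => k)) ?sum_nat_const ?card_ord 1?mulnC //.
by move=> j _; rewrite -card_sum_mem card_query k_eq.
Qed.

Lemma incidence_bound :
  (forall x, 0 < #|queries_at x|) ->
  n.*2 + n <= size S * k + #|deg1_balls|.*2 + #|deg2_balls|.
Proof.
have -> : n.*2 + n = \sum_(x : 'I_n) 3 by rewrite sum_nat_const card_ord; lia.
move=> deg_gt0; rewrite -sum_card_queries_at [#|deg1_balls|]card_sum_mem.
rewrite [#|deg2_balls|]card_sum_mem -mul2n big_distrr -!big_split /=.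
by apply: leq_sum => x _; move: (deg_gt0 x); rewrite !inE; case: #|queries_at x| => [|[|[|d]]].
Qed.

Lemma card_deg1_le : h.+2 <= N -> #|deg1_balls| <= size S.
Proof.
move=> le_hN; case: (set_0Vmem deg1_balls) => [-> | [x0]]; first by rewrite cards0.
rewrite inE => /cards1P [j0 _]; pose f x := odflt j0 [pick j in queries_at x].
have fE x : x \in deg1_balls -> queries_at x = [set f x].
  rewrite inE => /cards1P [j Jx]; rewrite /f Jx.
  by case: pickP => [i | /(_ j)]; rewrite !inE ?eqxx // => /eqP ->.
rewrite -[size S]card_ord; apply: (@leq_card_in _ _ f) => x w xD wD eq_f.
apply/eqP/negPn/negP => neq_xw; apply: (no_two_deg1_in_query le_hN neq_xw (fE x xD)).
by rewrite eq_f fE.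
Qed.

Lemma card_deg2_lt : size S + k.*2 <= n -> #|deg2_balls| < size S.
Proof.
move=> large; rewrite ltnNge; apply/negP => many.
have n_gt0 : 0 < n by lia.
have S_gt0 : 0 < size S.
  apply: leq_trans (queries_at_gt0 (Ordinal n_gt0) _) _; first lia.
  by rewrite -[X in _ <= X](card_ord (size S)) max_card.
have [m [u [e cyc]]] : exists m u e, is_cycle incident deg2_balls m u e.
  by apply: (cycle_of_many_edges (W := setT)) deg2_two_ends _ _; rewrite ?cardsT ?card_ord ?S_gt0.
have le_mS := cycle_length_le cyc; rewrite card_ord in le_mS.
have halves := odd_double_half m.
case: (boolP (odd m)) => [odd_m | even_m]; first by move: (no_odd_cycle cyc); rewrite odd_m.
by apply: (no_even_cycle cyc even_m); move: halves; rewrite (negbTE even_m); lia.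
Qed.

Lemma common_deg2_small i j :
  h.+2 <= N -> i != j -> 2 <= #|[set x in deg2_balls | queries_at x == [set i; j]]| ->
  N + #|[set x in deg2_balls | queries_at x == [set i; j]]| < h.*2 + 4.
Proof.
set D := [set x in deg2_balls | _] => le_hN neq_ij /card_gt1P [y0 [y1 [y0D y1D neq_y]]].
have inD y : y \in D -> [/\ y \in deg2_balls, y \in query i & y \in query j].
  rewrite inE => /andP [y2 /eqP Jy]; split=> //.
    by move/setP/(_ i): Jy; rewrite !inE eqxx.
  by move/setP/(_ j): Jy; rewrite !inE eqxx orbT.
pose u t := if t == 1 then j else i; pose e t := if t == 0 then y0 else y1.
have cyc : is_cycle incident deg2_balls 2 u e.
  split=> //; last by case=> // _; rewrite /e /= eq_sym.
  - case=> [|[|t]] // _; rewrite /e /u /incident /=.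
      by case: (inD _ y0D) => -> -> ->.
    by case: (inD _ y1D) => -> -> ->.
  - by case=> [|[|s]] [|[|t]] //= _ _; rewrite /u /= => eq_ij; rewrite eq_ij eqxx in neq_ij.
rewrite ltnNge; apply/negP => many; apply: (no_even_cycle cyc) => //=.
set Y := cycle_edges 2 e.
have sDY : D :\: Y \subset (query (u 0) :\: Y) :&: (query (u 1) :\: Y).
  apply/subsetP => y; rewrite [y \in D :\: Y]inE => /andP [NYy /inD [_ Qiy Qjy]].
  by rewrite !inE NYy Qiy Qjy.
have card_Y : #|Y| = 2 := card_cycle_edges deg2_two_ends cyc.
have := subset_leq_card sDY; rewrite cardsD.
have : #|D :&: Y| <= #|Y| by rewrite subset_leq_card ?subsetIr.
rewrite card_Y; set mu := #|(query (u 0) :\: Y) :&: (query (u 1) :\: Y)|; lia.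
Qed.

Lemma large_regime_bound :
  h.+2 <= N -> size S + k.*2 <= n -> n.*2 + n <= size S * (k + 3).
Proof.
move=> le_hN large; have N_gt0 : 0 < N by lia.
have := incidence_bound (fun x => queries_at_gt0 x N_gt0).
have := card_deg1_le le_hN; have := card_deg2_lt large; lia.
Qed.

Lemma small_regime_bound :
  h.+2 <= N -> 100 <= k -> n < size S + k.*2 -> 11 * n <= 5 * k * size S.
Proof.
move=> le_hN k_ge100 small; rewrite leqNgt; apply/negP => lt_q.
have N_gt0 : 0 < N by lia.
have q_le4 : size S <= 4 by nia.
have card_inc := incidence_bound (fun x => queries_at_gt0 x N_gt0).
have n1_le := card_deg1_le le_hN.
have n2_gt0 : 0 < #|deg2_balls| by nia.
have [A] : exists2 A, A \in [set A : {set 'I_(size S)} | #|A| == 2] &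
    #|deg2_balls| <= #|[set A : {set 'I_(size S)} | #|A| == 2]| *
                     #|[set x in deg2_balls | queries_at x == A]|.
  by apply: exists_large_fiber n2_gt0 => x; rewrite !inE.
rewrite card_draws card_ord inE => /cards2P [i [j [neq_ij ->]]] fiber.
have [s_ge2 many] := small_regime_arith fiber card_inc n1_le q_le4 lt_q k_ge100 le_hN k_eq n_eq.
move: many (common_deg2_small le_hN neq_ij s_ge2).
by set s := #|[set x in deg2_balls | queries_at x == [set i; j]]|; lia.
Qed.

End Strategy.

Lemma successful_size_bound k n (S : seq {set 'I_n}) :
  100 <= k -> ~~ odd k -> ~~ odd n -> successful k S -> 11 * n <= 5 * k * size S.
Proof.
move=> k_ge100 even_k even_n succ.
have [h k_eq] : exists h, k = h.*2.+2.
  by exists (k./2).-1; move: (odd_double_half k); rewrite (negbTE even_k); lia.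
have [N n_eq] : exists N, n = N.*2.
  by exists n./2; move: (odd_double_half n); rewrite (negbTE even_n); lia.
case: (posnP N) => [N0 | N_gt0]; first lia.
have n_gt0 : 0 < n by lia.
have le_kn : k <= n.
  have /card_gt0P [j _] := queries_at_gt0 succ k_eq n_eq (Ordinal n_gt0) N_gt0.
  by rewrite k_eq -(card_query succ k_eq j) -[X in _ <= X](card_ord n) max_card.
have le_hN : h.+2 <= N.
  case: (eqVneq n k) => [eq_nk | neq_nk]; last lia.
  by rewrite -eq_nk in succ; case: (full_queries_fail (_ : 2 < n) succ); lia.
case: (leqP (size S + k.*2) n) => [large | small].
  by have := large_regime_bound succ k_eq n_eq le_hN large; nia.
exact: (small_regime_bound succ k_eq n_eq le_hN k_ge100 small).
Qed.

Lemma stated_bound_le_nat k i n q :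
  k < 2 * i -> i < k -> 11 * n <= 5 * k * q ->
  n * (5 * i * k + i + i * i - k) <= q * ((2 * k + 3 + i) * i * k).
Proof.
move=> lt_k lt_i le_n.
have dom : 5 * (5 * i * k + i + i * i - k) <= 11 * ((2 * k + 3 + i) * i) by nia.
rewrite -(@leq_pmul2l 5) // mulnCA.
apply: leq_trans (leq_mul (leqnn n) dom) _.
by rewrite mulnCA mulnA [q * _]mulnC !mulnA -!(mulnA _ (2 * k + 3 + i)); nia.
Qed.

Import Order.TTheory GRing.Theory Num.Theory.
Local Open Scope ring_scope.

Lemma stated_bound_le k i n q :
  (k < 2 * i)%N -> (i < k)%N -> (11 * n <= 5 * k * q)%N ->
  (n%:R * (5 * i%:R * k%:R - k%:R + i%:R + i%:R ^+ 2) - 2 * (k%:R - i%:R))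
    / ((2 * k%:R + 3 + i%:R) * i%:R * k%:R) <= q%:R :> rat.
Proof.
move=> lt_k lt_i le_n.
have numE : 5 * i%:R * k%:R - k%:R + i%:R + i%:R ^+ 2 = (5 * i * k + i + i * i - k)%N%:R :> rat.
  by rewrite natrB; [rewrite !natrD !natrM; ring | nia].
have denE : (2 * k%:R + 3 + i%:R) * i%:R * k%:R = ((2 * k + 3 + i) * i * k)%N%:R :> rat.
  by rewrite !(natrM, natrD); ring.
rewrite ler_pdivrMr; last by rewrite denE ltr0n !muln_gt0; lia.
rewrite numE denE; apply: le_trans (_ : _ <= n%:R * (5 * i * k + i + i * i - k)%N%:R) _.
  by rewrite lerBlDr lerDl mulr_ge0 // subr_ge0 ler_nat ltnW.
by rewrite -!natrM ler_nat stated_bound_le_nat.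
Qed.

Lemma eleven_fifths_bound_lt k n q (eps : rat) :
  0 < eps -> (0 < k)%N -> (0 < n)%N -> (11 * n <= 5 * k * q)%N ->
  (11 / 5 - eps) * n%:R / k%:R < q%:R.
Proof.
move=> eps_gt0 k_gt0 n_gt0 le_n; rewrite ltr_pdivrMr ?ltr0n //.
have : 11 * n%:R <= 5 * k%:R * q%:R :> rat by move: le_n; rewrite -(ler_nat rat) !natrM.
have : 0 < n%:R :> rat by rewrite ltr0n.
nra.
Qed.

Theorem theorem8 :
  (exists K : nat, forall k : nat, ~~ odd k -> (K <= k)%N ->
     forall n : nat, ~~ odd n ->
     forall i : nat, (k < 2 * i)%N -> (i < k)%N ->
     N_CM_ge k n
       ((n%:R * (5 * i%:R * k%:R - k%:R + i%:R + i%:R ^+ 2) - 2 * (k%:R - i%:R))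
          / ((2 * k%:R + 3 + i%:R) * i%:R * k%:R) : rat))
  /\
  (forall eps : rat, 0 < eps ->
     exists k0 : nat, forall k : nat, ~~ odd k -> (k0 < k)%N ->
     exists n0 : nat, forall n : nat, ~~ odd n -> (n0 < n)%N ->
     N_CM_gt k n ((11 / 5 - eps) * n%:R / k%:R)).
Proof.
split.
  exists 100%N => k even_k k_ge n even_n i lt_k lt_i S succ.
  exact: stated_bound_le lt_k lt_i (successful_size_bound k_ge even_k even_n succ).
move=> eps eps_gt0; exists 100%N => k even_k k_gt; exists 0%N => n even_n n_gt0 S succ.
have k_gt0 : (0 < k)%N by apply: leq_trans k_gt.
apply: eleven_fifths_bound_lt eps_gt0 k_gt0 n_gt0 _.
exact: successful_size_bound (ltnW k_gt) even_k even_n succ.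
Qed.
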